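(* For all $U,U_0\in\mathbb{O}_+(p,r)$, $$\|\mathcal{A}(U)-\mathcal{A}(U_0)\|_F\le 2\|U-U_0\|_F .$$
   Context: Fix $1\le r\le p$. $\mathbb{O}(p,r)=\{U\in\mathbb{R}^{p\times r}:U^TU=I_r\}$ and $\mathbb{O}_+(p,r)=\{U=\begin{bmatrix}Q_1\\Q_2\end{bmatrix}\in\mathbb{O}(p,r): Q_1\in\mathbb{R}^{r\times r}\text{ symmetric positive definite}\}$. The inverse Cayley parameterization is the map $\mathcal{A}:\mathbb{O}_+(p,r)\to\mathbb{R}^{(p-r)\times r}$, $\mathcal{A}(U)=Q_2(I_r+Q_1)^{-1}$ for $U=\begin{bmatrix}Q_1\\Q_2\end{bmatrix}$. $\|\cdot\|_F$ is the Frobenius norm. *)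

From HB Require Import structures.
From mathcomp Require Import all_boot all_order all_algebra.
From mathcomp Require Import reals.
Set Implicit Arguments. Unset Strict Implicit. Unset Printing Implicit Defensive.
Import Order.TTheory GRing.Theory Num.Theory.
Local Open Scope ring_scope.

Definition spd (R : realType) (n : nat) (Q : 'M[R]_n) : Prop :=
  Q^T = Q /\ (forall x : 'cV[R]_n, x != 0 -> 0 < (x^T *m Q *m x) 0 0).

(* Stiefel manifold O(p,r), with p = r + q : U^T U = I_r. *)
Definition stiefel (R : realType) (r q : nat) (U : 'M[R]_(r + q, r)) : Prop :=
  U^T *m U = 1%:M.

Definition stiefel_plus (R : realType) (r q : nat) (U : 'M[R]_(r + q, r)) : Prop :=
  stiefel U /\ spd (usubmx U).

Definition cayleyA (R : realType) (r q : nat) (U : 'M[R]_(r + q, r)) : 'M[R]_(q, r) :=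
  dsubmx U *m invmx (1%:M + usubmx U).

Definition frob (R : realType) (m n : nat) (A : 'M[R]_(m, n)) : R :=
  Num.sqrt (\sum_(i < m) \sum_(j < n) A i j ^+ 2).

From mathcomp Require Import all_boot all_order all_algebra.
From mathcomp Require Import reals.
From mathcomp Require Import ring lra.
Import Order.TTheory GRing.Theory Num.Theory.
Set Implicit Arguments. Unset Strict Implicit.
Local Open Scope ring_scope.

(* Write U = [Q1; Q2], U0 = [P1; P2], B = (I + Q1)^-1, C = (I + P1)^-1.
   Since B - C = C ((I + P1) - (I + Q1)) B, we get the resolvent identity
     A(U) - A(U0) = (Q2 - P2) B + (P2 C) (P1 - Q1) B.
   Every factor B, C, P2 is a contraction for the Euclidean norm of columns:
   B and C because (I + Q)z has norm at least that of z when Q is symmetric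
   positive definite, and P2 because its columns are the bottom parts of the
   orthonormal columns of U0.  Multiplying by a contraction (on the left, or on
   the right when its transpose is one) does not increase the squared
   Frobenius norm, so with (a + b)^2 <= 2a^2 + 2b^2 we obtain
     |A(U) - A(U0)|^2 <= 2|Q2 - P2|^2 + 2|Q1 - P1|^2 <= 4|U - U0|^2,
   since the squared Frobenius norm of U - U0 splits over its two blocks. *)

Section Contractions.
Variable R : realType.

Definition frob2 m n (A : 'M[R]_(m, n)) : R := \sum_(i < m) \sum_(j < n) A i j ^+ 2.
Definition nrm n (y : 'cV[R]_n) : R := (y^T *m y) 0 0.

Definition contraction m n (C : 'M[R]_(m, n)) : Prop :=
  forall y : 'cV_n, nrm (C *m y) <= nrm y.

Lemma nrmE n (y : 'cV[R]_n) : nrm y = \sum_i y i 0 ^+ 2.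
Proof. rewrite /nrm mxE; apply: eq_bigr => i _; by rewrite mxE expr2. Qed.

Lemma nrm_ge0 n (y : 'cV[R]_n) : 0 <= nrm y.
Proof. rewrite nrmE; apply: sumr_ge0 => i _; exact: sqr_ge0. Qed.

Lemma frob2_ge0 m n (A : 'M[R]_(m, n)) : 0 <= frob2 A.
Proof. apply: sumr_ge0 => i _; apply: sumr_ge0 => j _; exact: sqr_ge0. Qed.

Lemma frob2_col m n (A : 'M[R]_(m, n)) : frob2 A = \sum_j nrm (col j A).
Proof.
rewrite /frob2 exchange_big; apply: eq_bigr => j _; rewrite nrmE.
by apply: eq_bigr => i _; rewrite mxE.
Qed.

Lemma frob2_tr m n (A : 'M[R]_(m, n)) : frob2 A^T = frob2 A.
Proof.
rewrite /frob2 exchange_big; apply: eq_bigr => j _; apply: eq_bigr => i _.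
by rewrite mxE.
Qed.

Lemma frob2N m n (A : 'M[R]_(m, n)) : frob2 (- A) = frob2 A.
Proof. by apply: eq_bigr => i _; apply: eq_bigr => j _; rewrite mxE sqrrN. Qed.

Lemma frob2_split r q n (A : 'M[R]_(r + q, n)) :
  frob2 A = frob2 (usubmx A) + frob2 (dsubmx A).
Proof.
rewrite /frob2 big_split_ord /=; congr (_ + _); apply: eq_bigr => i _;
  apply: eq_bigr => j _; by rewrite mxE.
Qed.

Lemma frob2_add m n (A B : 'M[R]_(m, n)) :
  frob2 (A + B) <= 2 * frob2 A + 2 * frob2 B.
Proof.
rewrite /frob2 !mulr_sumr -big_split /=; apply: ler_sum => i _.
rewrite !mulr_sumr -big_split /=; apply: ler_sum => j _.
rewrite mxE; move: (A i j) (B i j) => a b.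
have := sqr_ge0 (a - b); nra.
Qed.

Lemma contraction_mul m k n (C : 'M[R]_(m, k)) (D : 'M[R]_(k, n)) :
  contraction C -> contraction D -> contraction (C *m D).
Proof. by move=> hC hD y; rewrite -mulmxA; exact: le_trans (hC _) (hD y). Qed.

Lemma frob2_mull m k n (C : 'M[R]_(m, k)) (Y : 'M[R]_(k, n)) :
  contraction C -> frob2 (C *m Y) <= frob2 Y.
Proof.
move=> hC; rewrite !frob2_col; apply: ler_sum => j _.
by rewrite colE -mulmxA -colE.
Qed.

Lemma frob2_mulr m k n (Y : 'M[R]_(m, k)) (B : 'M[R]_(k, n)) :
  contraction B^T -> frob2 (Y *m B) <= frob2 Y.
Proof. move=> hB; rewrite -frob2_tr trmx_mul -(frob2_tr Y); exact: frob2_mull. Qed.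

End Contractions.

Section InverseCayley.
Variable R : realType.

Lemma e00D (A B : 'M[R]_1) : (A + B) 0 0 = A 0 0 + B 0 0.
Proof. by rewrite mxE. Qed.

Lemma e00N (A : 'M[R]_1) : (- A) 0 0 = - A 0 0.
Proof. by rewrite mxE. Qed.

Lemma quad_ge0 n (Q : 'M[R]_n) (z : 'cV_n) : spd Q -> 0 <= (z^T *m Q *m z) 0 0.
Proof.
move=> [_ posQ]; have [->|nz] := eqVneq z 0; first by rewrite mulmx0 mxE.
exact/ltW/posQ.
Qed.

Lemma nrm_1Q n (Q : 'M[R]_n) (z : 'cV_n) : Q^T = Q ->
  nrm ((1%:M + Q) *m z) = nrm z + (z^T *m Q *m z) 0 0 *+ 2 + nrm (Q *m z).
Proof.
move=> symQ; rewrite /nrm !trmx_mul linearD /= trmx1 symQ.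
rewrite !mulmxDl !mulmxDr !mul1mx !mulmx1 !mulmxA !mulmxDl !e00D mulr2n; lra.
Qed.

Lemma nrm_le_1Q n (Q : 'M[R]_n) (z : 'cV_n) : spd Q ->
  nrm z <= nrm ((1%:M + Q) *m z).
Proof.
move=> spdQ; rewrite nrm_1Q; last exact: spdQ.1.
have := quad_ge0 z spdQ; have := nrm_ge0 (Q *m z); rewrite mulr2n; lra.
Qed.

(* I + Q is invertible: a kernel vector v would give
   0 = |v|^2 + 2 v^T Q v + |Q v|^2 > 0. *)
Lemma unit_1Q n (Q : 'M[R]_n) : spd Q -> (1%:M + Q) \in unitmx.
Proof.
move=> spdQ; rewrite unitmxE unitfE; apply/negP => /det0P [v nz hv].
have sym1Q : (1%:M + Q)^T = 1%:M + Q by rewrite linearD /= trmx1 spdQ.1.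
have kerv : nrm ((1%:M + Q) *m v^T) = 0.
  by rewrite -sym1Q -trmx_mul hv trmx0 /nrm mulmx0 mxE.
have := spdQ.2 v^T; rewrite trmx_eq0 => /(_ nz).
have := nrm_1Q v^T spdQ.1; rewrite kerv.
have := nrm_ge0 v^T; have := nrm_ge0 (Q *m v^T); rewrite mulr2n; lra.
Qed.

Lemma resolvent_sym n (Q : 'M[R]_n) : spd Q ->
  (invmx (1%:M + Q))^T = invmx (1%:M + Q).
Proof. by move=> spdQ; rewrite trmx_inv linearD /= trmx1 spdQ.1. Qed.

Lemma resolvent_contraction n (Q : 'M[R]_n) : spd Q ->
  contraction (invmx (1%:M + Q)).
Proof.
move=> spdQ y; have := nrm_le_1Q (invmx (1%:M + Q) *m y) spdQ.
by rewrite mulmxA mulmxV ?mul1mx // unit_1Q.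
Qed.

Lemma resolvent_tr_contraction n (Q : 'M[R]_n) : spd Q ->
  contraction (invmx (1%:M + Q))^T.
Proof. by move=> spdQ; rewrite resolvent_sym //; exact: resolvent_contraction. Qed.

(* The bottom block of a matrix with orthonormal columns is a contraction,
   since |Q2 z|^2 = |z|^2 - |Q1 z|^2. *)
Lemma dsubmx_contraction r q (U : 'M[R]_(r + q, r)) :
  stiefel U -> contraction (dsubmx U).
Proof.
move=> orthU z.
have : (col_mx (usubmx U) (dsubmx U))^T *m col_mx (usubmx U) (dsubmx U) = 1%:M.
  by rewrite vsubmxK.
rewrite tr_col_mx mul_row_col => /(canRL (addKr _)) e.
have -> : nrm (dsubmx U *m z) = nrm z - nrm (usubmx U *m z).
  rewrite /nrm !trmx_mul (mulmxA (z^T *m _)) -(mulmxA z^T) e.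
  rewrite mulmxDr mulmxDl mulmx1 mulmxN mulNmx e00D e00N.
  by rewrite addrC !mulmxA.
have := nrm_ge0 (usubmx U *m z); lra.
Qed.

Lemma cayleyA_diff r q (U U0 : 'M[R]_(r + q, r)) :
  (1%:M + usubmx U) \in unitmx -> (1%:M + usubmx U0) \in unitmx ->
  cayleyA U - cayleyA U0 =
    (dsubmx U - dsubmx U0) *m invmx (1%:M + usubmx U)
    + (dsubmx U0 *m invmx (1%:M + usubmx U0))
      *m ((usubmx U0 - usubmx U) *m invmx (1%:M + usubmx U)).
Proof.
move=> uQ uP; rewrite /cayleyA.
have -> : usubmx U0 - usubmx U = (1%:M + usubmx U0) - (1%:M + usubmx U).
  by rewrite opprD addrACA subrr add0r.
rewrite !mulmxBl !mulmxBr mulmxV // mulmx1 -!mulmxA.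
by rewrite (mulmxA (invmx _)) mulVmx // mul1mx addrA subrK.
Qed.

Lemma frob_le_2 m n k l (X : 'M[R]_(m, n)) (Y : 'M[R]_(k, l)) :
  frob2 X <= 4 * frob2 Y -> frob X <= 2 * frob Y.
Proof.
move=> h; rewrite /frob -/(frob2 X) -/(frob2 Y).
apply: le_trans (ler_wsqrtr h) _.
rewrite sqrtrM ?ler0n // (_ : 4 = 2 ^+ 2); last by rewrite -natrX.
by rewrite sqrtr_sqr ger0_norm.
Qed.

End InverseCayley.

Theorem theorem2 (R : realType) (r q : nat) (hr : (1 <= r)%N)
  (U U0 : 'M[R]_(r + q, r)) :
  stiefel_plus U -> stiefel_plus U0 ->
  frob (cayleyA U - cayleyA U0) <= 2 * frob (U - U0).
Proof.
move=> [orthU spdQ] [orthU0 spdP].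
have contrBT := resolvent_tr_contraction spdQ.
have h1 : frob2 ((dsubmx U - dsubmx U0) *m invmx (1%:M + usubmx U))
          <= frob2 (dsubmx U - dsubmx U0) by exact: frob2_mulr.
have h2 : frob2 ((dsubmx U0 *m invmx (1%:M + usubmx U0))
                 *m ((usubmx U0 - usubmx U) *m invmx (1%:M + usubmx U)))
          <= frob2 (usubmx U - usubmx U0).
  apply: le_trans (frob2_mull _ (contraction_mul (dsubmx_contraction orthU0)
                     (resolvent_contraction spdP))) _.
  by rewrite -(frob2N (_ - _)) opprB; exact: frob2_mulr.
have hU : frob2 (U - U0)
          = frob2 (usubmx U - usubmx U0) + frob2 (dsubmx U - dsubmx U0).
  by rewrite frob2_split linearB /= [dsubmx (U - U0)]linearB.
apply: frob_le_2; rewrite cayleyA_diff ?unit_1Q //.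
apply: le_trans (frob2_add _ _) _; rewrite hU.
have := frob2_ge0 (usubmx U - usubmx U0); have := frob2_ge0 (dsubmx U - dsubmx U0).
lra.
Qed.
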